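(* Let $\mathfrak l$ be a real finite-dimensional nilpotent Lie algebra with $\dim\mathfrak l'=2$ and $\mathfrak l'\subset\mathfrak z(\mathfrak l)$, having a basis $X_1,\dots,X_n,Y,Z$ ($n\ge4$) with $[X_1,X_2]=Y$, $[X_1,X_3]=Z$, $[X_2,X_3]=0$, $[X_1,X_4]=0$, $[X_2,X_4]=Z$, and $[X_1,X_j]=[X_2,X_j]=0$ for $j\ge5$. Let $\mathfrak a$ be a semisimple orthogonal $\mathfrak l$-module and $[\alpha,\gamma]\in\mathcal H^2_Q(\mathfrak l,\mathfrak a)$ admissible, represented with $\alpha(\mathfrak l,\mathfrak l)\subset\mathfrak a^{\mathfrak l}$. Then $\alpha([X_3,X_j],\cdot)=0$ for all $j\ge5$.
   Context: For a Lie algebra $\mathfrak l$: $\mathfrak l^1=\mathfrak l$, $\mathfrak l^{k+1}=[\mathfrak l,\mathfrak l^k]$, $\mathfrak l'=\mathfrak l^2$, $\mathfrak z(\mathfrak l)$ the centre. An orthogonal $\mathfrak l$-module $(\rho,\mathfrak a)$ is a finite-dimensional real vector space with a nondegenerate symmetric bilinear form $\langle\cdot,\cdot\rangle_{\mathfrak a}$ and a representation by skew-adjoint maps; $\mathfrak a^{\mathfrak l}$ its invariants. $C^p(\mathfrak l,\mathfrak a)$: alternating $p$-linear maps with Chevalley–Eilenberg differential $d$; $C^p(\mathfrak l)=C^p(\mathfrak l,\mathbb R)$; $\langle\alpha\wedge\beta\rangle$ is the wedge product followed by contraction with $\langle\cdot,\cdot\rangle_{\mathfrak a}$. $\mathcal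 Z^2_Q(\mathfrak l,\mathfrak a)=\{(\alpha,\gamma)\in C^2(\mathfrak l,\mathfrak a)\oplus C^3(\mathfrak l): d\alpha=0,d\gamma=\frac12\langle\alpha\wedge\alpha\rangle\}$; the group $C^1(\mathfrak l,\mathfrak a)\oplus C^2(\mathfrak l)$ with $(\tau_1,\sigma_1)*(\tau_2,\sigma_2)=(\tau_1+\tau_2,\sigma_1+\sigma_2+\frac12\langle\tau_1\wedge\tau_2\rangle)$ acts by $(\alpha,\gamma)(\tau,\sigma)=(\alpha+d\tau,\gamma+d\sigma+\langle(\alpha+\frac12d\tau)\wedge\tau\rangle)$; $\mathcal H^2_Q(\mathfrak l,\mathfrak a)$ is the orbit set. Admissibility: with $\mathfrak l^{m+2}=0$, $\mathfrak l_{(0)}=\mathfrak z(\mathfrak l)\cap\ker\rho$, $\mathfrak l_{(k)}=\mathfrak z(\mathfrak l)\cap\mathfrak l^{k+1}$ ($k\ge1$), and a representative with $\alpha(\mathfrak l,\mathfrak l)\subset\mathfrak a^{\mathfrak l}$, the class is admissible iff for all $0\le k\le m$: $(A_k)$ whenever $L_0\in\mathfrak l_{(k)}$ and there are $A_0\in\mathfrak a$, $Z_0\in(\mathfrak l^{k+1})^*$ with $\alpha(L,L_0)=0$ and $\gamma(L,L_0,\cdot)=-\langle A_0,\alpha(L,\cdot)\rangle_{\mathfrak a}+\langle Z_0,[L,\cdot]\rangle$ on $\mathfrak l^{k+1}$ for all $L$, then $L_0=0$; $(B_k)$ $\alpha$ applied to the kernel of the bracket map $\mathfrak l\otimes\mathfrak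 l^{k+1}\to\mathfrak l$ is a nondegenerate subspace of $\mathfrak a$. *)

From HB Require Import structures.
From mathcomp Require Import all_boot all_order all_algebra.
From mathcomp Require Import reals.
Set Implicit Arguments. Unset Strict Implicit. Unset Printing Implicit Defensive.
Import Order.TTheory GRing.Theory Num.Theory.
Local Open Scope ring_scope.

Definition linv (R : realType) (U V : lmodType R) (f : U -> V) : Prop :=
  forall (c : R) (u v : U), f (c *: u + v) = c *: f u + f v.
Definition linR (R : realType) (U : lmodType R) (f : U -> R) : Prop :=
  forall (c : R) (u v : U), f (c *: u + v) = c * f u + f v.

Section LieDefs.
Variables (R : realType) (l : vectType R) (br : l -> l -> l).

Definition is_lie_bracket : Prop :=
  [/\ forall x, linv (br x), forall y, linv (fun x => br x y),
      forall x, br x x = 0 &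
      forall x y z, br x (br y z) + br y (br z x) + br z (br x y) = 0].

Definition brsp (U V : {vspace l}) : {vspace l} :=
  <<[seq br u v | u <- vbasis U, v <- vbasis V]>>%VS.

Fixpoint lcs_aux (k : nat) : {vspace l} :=
  if k is k'.+1 then brsp fullv (lcs_aux k') else fullv.
(* lower central series l^k (paper indexing: l^1 = l, l^(k+1) = [l, l^k]) *)
Definition lcs (k : nat) : {vspace l} := lcs_aux k.-1.

Definition central (z : l) : Prop := forall x, br x z = 0.

Variables (a : vectType R) (B : a -> a -> R) (rho : l -> a -> a).

Definition is_orth_module : Prop :=
  [/\ (forall u, linR (B u)) /\ (forall u v, B u v = B v u),
      (forall u, (forall v, B u v = 0) -> u = 0),
      (forall x, linv (rho x)) /\ (forall v, linv (fun x => rho x v)),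
      (forall x y v, rho (br x y) v = rho x (rho y v) - rho y (rho x v)) &
      (forall x u v, B (rho x u) v = - B u (rho x v))].

Definition invariant_sub (U : {vspace a}) : Prop :=
  forall x u, u \in U -> rho x u \in U.

Definition semisimple_module : Prop :=
  forall U : {vspace a}, invariant_sub U ->
    exists W : {vspace a}, [/\ invariant_sub W, (U :&: W = 0)%VS & (U + W = fullv)%VS].

Definition invariant_vec (v : a) : Prop := forall x, rho x v = 0.

Definition cochain2 (al : l -> l -> a) : Prop :=
  [/\ forall x, linv (al x), forall y, linv (fun x => al x y) & forall x, al x x = 0].
Definition cochain3 (g : l -> l -> l -> R) : Prop :=
  [/\ (forall x y, linR (g x y)) /\ (forall x z, linR (fun y => g x y z))
      /\ (forall y z, linR (fun x => g x y z)),
      forall x y, g x x y = 0, forall x y, g x y y = 0 & forall x y, g x y x = 0].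

Definition d2 (al : l -> l -> a) (x y z : l) : a :=
  rho x (al y z) - rho y (al x z) + rho z (al x y)
  - al (br x y) z + al (br x z) y - al (br y z) x.
Definition d3 (g : l -> l -> l -> R) (x y z w : l) : R :=
  - g (br x y) z w + g (br x z) y w - g (br x w) y z
  - g (br y z) x w + g (br y w) x z - g (br z w) x y.
(* <al /\ al> (shuffle convention for the wedge product) *)
Definition wedgeB (al : l -> l -> a) (x y z w : l) : R :=
  B (al x y) (al z w) - B (al x z) (al y w) + B (al x w) (al y z)
  + B (al y z) (al x w) - B (al y w) (al x z) + B (al z w) (al x y).

Definition Z2Q (al : l -> l -> a) (g : l -> l -> l -> R) : Prop :=
  [/\ cochain2 al, cochain3 g, (forall x y z, d2 al x y z = 0) &
      (forall x y z w, d3 g x y z w = 2^-1 * wedgeB al x y z w)].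

Definition lk (k : nat) (L0 : l) : Prop :=
  central L0 /\ (if k is 0 then forall v, rho L0 v = 0 else L0 \in lcs k.+1).

Definition condA (al : l -> l -> a) (g : l -> l -> l -> R) (k : nat) : Prop :=
  forall L0, lk k L0 ->
    (exists (A0 : a) (Z0 : l -> R), linR Z0 /\
       forall L, al L L0 = 0 /\
         forall L', L' \in lcs k.+1 ->
           g L L0 L' = - B A0 (al L L') + Z0 (br L L')) ->
    L0 = 0.

(* the image under al of the kernel of the bracket map l (x) l^(k+1) -> l,
   elements of the tensor product written as finite sums of pure tensors *)
Definition alpha_ker (al : l -> l -> a) (k : nat) (v : a) : Prop :=
  exists s : seq (l * l),
    [/\ all (fun p => p.2 \in lcs k.+1) s,
        \sum_(p <- s) br p.1 p.2 = 0 &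
        v = \sum_(p <- s) al p.1 p.2].

Definition condB (al : l -> l -> a) (k : nat) : Prop :=
  forall v, alpha_ker al k v -> (forall w, alpha_ker al k w -> B v w = 0) -> v = 0.

(* admissibility, tested on a representative with al(l,l) in a^l, where
   l^(m+2) = 0 *)
Definition admissible_rep (m : nat) (al : l -> l -> a) (g : l -> l -> l -> R) : Prop :=
  forall k, (k <= m)%N -> condA al g k /\ condB al k.

End LieDefs.

(* Because alpha takes values in invariants, the cocycle condition d alpha = 0
   reads alpha(x,[y,z]) = alpha([x,y],z) - alpha([x,z],y).  As l' is central,
   this forces alpha(l',l') = 0; as dim l' = 2, the alternating form gamma
   vanishes on l'; so d gamma = 1/2 <alpha /\ alpha> evaluated at (x,y,z,w) with
   z, w in l' becomes the symmetry <alpha(x,z),alpha(y,w)> = <alpha(x,w),alpha(y,z)>.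
   Condition (B_1) makes the span of alpha(l,l') nondegenerate, and the brackets
   among X_1,...,X_4 show that it is spanned by alpha(X_1,l') and alpha(X_2,l').
   For c = [X_3,X_j] the cocycle identity gives alpha(X_2,c) = 0,
   alpha(X_1,[X_4,X_j]) = 0 and alpha(X_1,c) = alpha(X_2,[X_4,X_j]); the symmetry
   then makes first alpha(X_1,c), and then every alpha(L,c), orthogonal to
   alpha(l,l'), hence zero. *)

From HB Require Import structures.
From mathcomp Require Import all_boot all_order all_algebra.
From mathcomp Require Import reals.
From mathcomp Require Import lra.
Import Order.TTheory GRing.Theory Num.Theory.
Local Open Scope ring_scope.
Set Implicit Arguments.
Unset Strict Implicit.

Section LinearMaps.
Variables (R : realType) (U V : lmodType R) (f : U -> V).
Hypothesis f_lin : linv f.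

Let F : {linear U -> V} := HB.pack f (GRing.isLinear.Build R U V *:%R f f_lin).

Lemma linv0 : f 0 = 0. Proof. exact: (linear0 F). Qed.
Lemma linvD : {morph f : u v / u + v}. Proof. exact: (linearD F). Qed.
Lemma linvN : {morph f : u / - u}. Proof. exact: (linearN F). Qed.
Lemma linvZ c u : f (c *: u) = c *: f u. Proof. exact: (linearZ_LR F). Qed.
Lemma linv_sum I r (P : pred I) (G : I -> U) :
  f (\sum_(i <- r | P i) G i) = \sum_(i <- r | P i) f (G i).
Proof. exact: (linear_sum F). Qed.

End LinearMaps.

Lemma linR_linv (R : realType) (U : lmodType R) (f : U -> R) :
  linR f -> linv (f : U -> R^o).
Proof. by []. Qed.

Section ScalarMaps.
Variables (R : realType) (U : lmodType R) (f : U -> R).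
Hypothesis f_lin : linR f.

Lemma linR0 : f 0 = 0. Proof. exact: linv0 (linR_linv f_lin). Qed.
Lemma linRD : {morph f : u v / u + v}. Proof. exact: linvD (linR_linv f_lin). Qed.
Lemma linRN : {morph f : u / - u}. Proof. exact: linvN (linR_linv f_lin). Qed.
Lemma linRZ c u : f (c *: u) = c * f u.
Proof. exact: (linvZ (linR_linv f_lin) c u). Qed.
Lemma linR_sum I r (P : pred I) (G : I -> U) :
  f (\sum_(i <- r | P i) G i) = \sum_(i <- r | P i) f (G i).
Proof. exact: (linv_sum (linR_linv f_lin)). Qed.

End ScalarMaps.

Lemma alt_antisym (R : realType) (U V : lmodType R) (f : U -> U -> V) :
  (forall x, linv (f x)) -> (forall y, linv (f^~ y)) -> (forall x, f x x = 0) ->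
  forall x y, f x y = - f y x.
Proof.
move=> f_linr f_linl f_alt x y; apply/eqP; rewrite -addr_eq0; apply/eqP.
rewrite -[RHS](f_alt (x + y)) (linvD (f_linl _)) !(linvD (f_linr _)).
by rewrite !f_alt add0r addr0.
Qed.

Lemma linv_span_eq0 (R : realType) (U : vectType R) (V : lmodType R)
    (f : U -> V) X u :
  linv f -> {in X, forall x, f x = 0} -> u \in <<X>>%VS -> f u = 0.
Proof.
move=> f_lin fX /(coord_span (X := in_tuple X)) ->.
rewrite linv_sum // big1 // => i _.
by rewrite linvZ // fX ?scaler0 // mem_nth.
Qed.

Lemma memv_span2 (K : fieldType) (vT : vectType K) (e1 e2 u : vT) :
  u \in <<[:: e1; e2]>>%VS -> exists c1 c2, u = c1 *: e1 + c2 *: e2.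
Proof.
rewrite span_cons span_seq1 => /memv_addP [_ /vlineP [c1 ->] [_ /vlineP [c2 ->] ->]].
by exists c1, c2.
Qed.

Lemma free_span_dim (K : fieldType) (vT : vectType K) (V : {vspace vT})
    (X : seq vT) :
  free X -> {subset X <= V} -> \dim V = size X -> <<X>>%VS = V.
Proof.
move=> freeX XV dimV; apply/span_basis.
by rewrite basisEfree freeX dimV leqnn andbT; apply/span_subvP.
Qed.

Lemma cochain3_span2 (R : realType) (l : vectType R) (g : l -> l -> l -> R)
    (e1 e2 u v w : l) :
  cochain3 g -> u \in <<[:: e1; e2]>>%VS -> v \in <<[:: e1; e2]>>%VS ->
  w \in <<[:: e1; e2]>>%VS -> g u v w = 0.
Proof.
move=> [[g_lin3 [g_lin2 g_lin1]] g_alt12 g_alt23 g_alt13].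
move=> /memv_span2 [a1 [b1 ->]] /memv_span2 [a2 [b2 ->]] /memv_span2 [a3 [b3 ->]].
have gD1 x x' y z : g (x + x') y z = g x y z + g x' y z := linRD (g_lin1 y z) x x'.
have gZ1 c x y z : g (c *: x) y z = c * g x y z := linRZ (g_lin1 y z) c x.
have gD2 x y y' z : g x (y + y') z = g x y z + g x y' z := linRD (g_lin2 x z) y y'.
have gZ2 c x y z : g x (c *: y) z = c * g x y z := linRZ (g_lin2 x z) c y.
have gD3 x y z z' : g x y (z + z') = g x y z + g x y z' := linRD (g_lin3 x y) z z'.
have gZ3 c x y z : g x y (c *: z) = c * g x y z := linRZ (g_lin3 x y) c z.
rewrite !(gD1, gZ1, gD2, gZ2, gD3, gZ3, g_alt12, g_alt23, g_alt13).
by rewrite !(mulr0, addr0, add0r).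
Qed.

Section CentralDerivedAlgebra.
Variables (R : realType) (l a : vectType R) (br : l -> l -> l).
Hypotheses (br_linr : forall x, linv (br x)) (br_linl : forall y, linv (br^~ y)).
Hypothesis br_alt : forall x, br x x = 0.

Let br_antisym := alt_antisym br_linr br_linl br_alt.

Lemma br_lcs2 x y : br x y \in lcs br 2.
Proof.
rewrite (coord_vbasis (memvf x)) (linv_sum (br_linl y)); apply: rpred_sum => i _.
rewrite (linvZ (br_linl y)); apply: rpredZ.
rewrite (coord_vbasis (memvf y)) (linv_sum (br_linr _)); apply: rpred_sum => k _.
rewrite (linvZ (br_linr _)); apply/rpredZ/memv_span/allpairs_f;
  by apply: mem_nth; rewrite size_tuple.
Qed.

Hypothesis lcs2_central : forall v, v \in lcs br 2 -> central br v.

Variable al : l -> l -> a.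
Hypotheses (al_linr : forall x, linv (al x)) (al_linl : forall y, linv (al^~ y)).
Hypothesis al_alt : forall x, al x x = 0.

Let alpha_antisym := alt_antisym al_linr al_linl al_alt.

Variable rho : l -> a -> a.
Hypothesis al_closed : forall x y z, d2 br rho al x y z = 0.
Hypothesis al_inv : forall x y, invariant_vec rho (al x y).

Lemma alpha_cocycle x y z : al x (br y z) = al (br x y) z - al (br x z) y.
Proof.
have := al_closed x y z; rewrite /d2 !al_inv subrr !add0r => /eqP.
rewrite subr_eq0 => /eqP D_eq.
by rewrite alpha_antisym -D_eq opprD opprK.
Qed.

Lemma alpha_br_eq0 x y z : br x y = 0 -> br x z = 0 -> al x (br y z) = 0.
Proof. by move=> xy0 xz0; rewrite alpha_cocycle xy0 xz0 !(linv0 (al_linl _)) subrr. Qed.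

Lemma alpha_lcs2_lcs2 u w : u \in lcs br 2 -> w \in lcs br 2 -> al u w = 0.
Proof.
move=> u_l2 w_l2; apply: (linv_span_eq0 (al_linl w)) u_l2.
move=> _ /allpairsP [[x y] [_ _ ->]].
have w_br v : br w v = 0 by rewrite br_antisym lcs2_central ?oppr0.
by rewrite alpha_antisym alpha_br_eq0 ?oppr0.
Qed.

Variables (B : a -> a -> R) (g : l -> l -> l -> R).
Hypotheses (B_linr : forall u, linR (B u)) (B_sym : forall u v, B u v = B v u).
Hypothesis g_linl : forall y z, linR (fun x => g x y z).
Hypothesis g_lcs2 : forall u v w,
  u \in lcs br 2 -> v \in lcs br 2 -> w \in lcs br 2 -> g u v w = 0.
Hypothesis al_wedge : forall x y z w, d3 br g x y z w = 2^-1 * wedgeB B al x y z w.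

Lemma wedge_lcs2_sym x y z w : z \in lcs br 2 -> w \in lcs br 2 ->
  B (al x z) (al y w) = B (al x w) (al y z).
Proof.
move=> z_l2 w_l2; have := al_wedge x y z w.
rewrite /d3 /wedgeB !(lcs2_central z_l2) !(lcs2_central w_l2).
rewrite (g_lcs2 (br_lcs2 x y) z_l2 w_l2) !(linR0 (g_linl _ _)).
rewrite (alpha_lcs2_lcs2 z_l2 w_l2) [B 0 _]B_sym !(linR0 (B_linr _)).
rewrite [B (al y z) _]B_sym [B (al y w) _]B_sym.
lra.
Qed.

Lemma condB1_perp_eq0 x u : condB br B al 1 -> u \in lcs br 2 ->
  (forall y w, w \in lcs br 2 -> B (al x u) (al y w) = 0) -> al x u = 0.
Proof.
move=> condB1 u_l2 xu_perp; apply: condB1.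
  (* u is central, so x (x) u lies in the kernel of the bracket map *)
  by exists [:: (x, u)]; rewrite /= u_l2 !big_seq1 lcs2_central.
move=> _ [s [s_l2 _ ->]]; rewrite (linR_sum (B_linr _)) big1_seq //.
move=> -[y w] /andP [_ yw_s].
exact/xu_perp/(allP s_l2 _ yw_s).
Qed.

Variables (X : nat -> l) (Y Z : l).
Hypothesis lcs2_span : lcs br 2 = <<[:: Y; Z]>>%VS.
Hypotheses (br12 : br (X 1%N) (X 2%N) = Y) (br13 : br (X 1%N) (X 3%N) = Z).
Hypotheses (br23 : br (X 2%N) (X 3%N) = 0) (br24 : br (X 2%N) (X 4%N) = Z).

Lemma perp_alpha_lcs2 v :
  {in lcs br 2, forall u, B v (al (X 1%N) u) = 0} ->
  {in lcs br 2, forall u, B v (al (X 2%N) u) = 0} ->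
  forall y, {in lcs br 2, forall w, B v (al y w) = 0}.
Proof.
move=> v1 v2.
have BB u u' : B v (u - u') = B v u - B v u'.
  by rewrite (linRD (B_linr _)) (linRN (B_linr _)).
have v_span2 y : B v (al y Y) = 0 -> B v (al y Z) = 0 ->
    {in lcs br 2, forall w, B v (al y w) = 0}.
  move=> vY vZ w; rewrite lcs2_span => /memv_span2 [c1 [c2 ->]].
  rewrite (linvD (al_linr _)) !(linvZ (al_linr _)).
  by rewrite (linRD (B_linr _)) !(linRZ (B_linr _)) vY vZ !mulr0 addr0.
have vY y : B v (al y Y) = 0.
  rewrite -br12 alpha_cocycle BB ![al (br y _) _]alpha_antisym !(linRN (B_linr _)).
  by rewrite v1 ?v2 ?br_lcs2 // oppr0 subr0.
have v3 : {in lcs br 2, forall u, B v (al (X 3%N) u) = 0}.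
  apply: v_span2 => //.
  rewrite -br24 alpha_cocycle br_antisym br23 oppr0 (linv0 (al_linl _)) sub0r.
  by rewrite alpha_antisym opprK v2 ?br_lcs2.
have vZ y : B v (al y Z) = 0.
  rewrite -br13 alpha_cocycle BB ![al (br y _) _]alpha_antisym !(linRN (B_linr _)).
  by rewrite v1 ?v3 ?br_lcs2 // oppr0 subr0.
by move=> y; apply: v_span2.
Qed.

Hypothesis br14 : br (X 1%N) (X 4%N) = 0.

Lemma alpha_br3_eq0 j : condB br B al 1 ->
  br (X 1%N) (X j) = 0 -> br (X 2%N) (X j) = 0 ->
  forall L, al (br (X 3%N) (X j)) L = 0.
Proof.
move=> condB1 br1j br2j L.
set c := br (X 3%N) (X j); set d := br (X 4%N) (X j).
have c_l2 : c \in lcs br 2 := br_lcs2 _ _.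
have d_l2 : d \in lcs br 2 := br_lcs2 _ _.
have al2c : al (X 2%N) c = 0 := alpha_br_eq0 br23 br2j.
have al1d : al (X 1%N) d = 0 := alpha_br_eq0 br14 br1j.
have al1c : al (X 1%N) c = al (X 2%N) d.
  by rewrite !alpha_cocycle br13 br24 br1j br2j !(linv0 (al_linl _)).
have swap x y z w : z \in lcs br 2 -> w \in lcs br 2 ->
    B (al x z) (al y w) = B (al y z) (al x w).
  by move=> z_l2 w_l2; rewrite wedge_lcs2_sym // B_sym.
have B0l u : B 0 u = 0 by rewrite B_sym (linR0 (B_linr _)).
have perp_eq0 x : {in lcs br 2, forall u, B (al x c) (al (X 1%N) u) = 0} ->
    {in lcs br 2, forall u, B (al x c) (al (X 2%N) u) = 0} -> al x c = 0.
  by move=> x1 x2; apply: condB1_perp_eq0 => //; apply: perp_alpha_lcs2.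
have al1c0 : al (X 1%N) c = 0.
  apply: perp_eq0 => u u_l2; first by rewrite al1c swap // al1d B0l.
  by rewrite swap // al2c B0l.
rewrite alpha_antisym (perp_eq0 L) ?oppr0 // => u u_l2.
  by rewrite swap // al1c0 B0l.
by rewrite swap // al2c B0l.
Qed.

End CentralDerivedAlgebra.

Lemma admissible_condB1 (R : realType) (l a : vectType R) (br : l -> l -> l)
    (B : a -> a -> R) (rho : l -> a -> a) m al g :
  lcs br m.+2 = 0%VS -> lcs br 2 != 0%VS -> admissible_rep br B rho m al g ->
  condB br B al 1.
Proof. by case: m => [-> /eqP // | m _ _ adm]; exact: (adm 1%N isT).2. Qed.

Unset Implicit Arguments.

Theorem lemma7 (R : realType) (l : vectType R) (br : l -> l -> l)
  (n : nat) (X : nat -> l) (Y Z : l) (m : nat)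
  (a : vectType R) (B : a -> a -> R) (rho : l -> a -> a)
  (al : l -> l -> a) (g : l -> l -> l -> R) :
  is_lie_bracket br ->
  lcs br (m.+2) = 0%VS ->
  \dim (lcs br 2) = 2%N ->
  (forall v, v \in lcs br 2 -> central br v) ->
  (4 <= n)%N ->
  basis_of fullv ([seq X i | i <- iota 1 n] ++ [:: Y; Z]) ->
  br (X 1%N) (X 2%N) = Y -> br (X 1%N) (X 3%N) = Z -> br (X 2%N) (X 3%N) = 0 ->
  br (X 1%N) (X 4%N) = 0 -> br (X 2%N) (X 4%N) = Z ->
  (forall j, (5 <= j <= n)%N -> br (X 1%N) (X j) = 0 /\ br (X 2%N) (X j) = 0) ->
  is_orth_module br B rho ->
  semisimple_module rho ->
  Z2Q br B rho al g ->
  (forall x y, invariant_vec rho (al x y)) ->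
  admissible_rep br B rho m al g ->
  forall j, (5 <= j <= n)%N -> forall L, al (br (X 3%N) (X j)) L = 0.
Proof.
(* Only (B_1) of admissibility is needed. *)
move=> [br_linr br_linl br_alt _] lcs_nil dim_lcs2 lcs2_central _ basisXYZ.
move=> br12 br13 br23 br14 br24 brXj [[B_linr B_sym] _ _ _ _] _.
move=> [[al_linr al_linl al_alt] g_cochain al_closed al_wedge] al_inv adm j j_range.
have [[_ [_ g_linl]] _ _ _] := g_cochain.
have lcs2_span : lcs br 2 = <<[:: Y; Z]>>%VS.
  apply/esym/free_span_dim; rewrite ?dim_lcs2 //.
    exact: catr_free (basis_free basisXYZ).
  by move=> u; rewrite !inE => /orP [] /eqP ->; rewrite -?br12 -?br13; exact: br_lcs2.
have condB1 : condB br B al 1.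
  by apply: admissible_condB1 lcs_nil _ adm; rewrite -dimv_eq0 dim_lcs2.
have g_lcs2 u v w :
    u \in lcs br 2 -> v \in lcs br 2 -> w \in lcs br 2 -> g u v w = 0.
  by rewrite lcs2_span; exact: cochain3_span2.
have [br1j br2j] := brXj j j_range.
exact: (alpha_br3_eq0 br_linr br_linl br_alt lcs2_central al_linr al_linl al_alt
  al_closed al_inv B_linr B_sym g_linl g_lcs2 al_wedge lcs2_span br12 br13 br23 br24 br14).
Qed.
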